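(* Let $n\ge 2$. Then $$\max_{\pi}\ \min_{1\le i\le n-1}|\pi_{i+1}-\pi_i| = \lfloor n/2\rfloor,$$ where the maximum is over all permutations $\pi=(\pi_1,\ldots,\pi_n)$ of $\{1,\ldots,n\}$. *)

From mathcomp Require Import all_boot all_order all_fingroup.
Set Implicit Arguments. Unset Strict Implicit. Unset Printing Implicit Defensive.

(* Permutations of {1..n} are modelled as permutations of 'I_n = {0..n-1};
   shifting all values by 1 does not change differences. *)

Definition natdist (a b : nat) : nat := maxn a b - minn a b.

Definition perm_at n (s : {perm 'I_n}) (k : nat) : nat :=
  match insub k with Some j => val (s j) | None => 0 end.

(* min_{1 <= i <= n-1} |pi_{i+1} - pi_i|  (n used as neutral element; all gaps are < n) *)
Definition min_gap n (s : {perm 'I_n}) : nat :=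
  \big[minn/n]_(i < n.-1) natdist (perm_at s i.+1) (perm_at s i).

From mathcomp Require Import all_boot all_order all_fingroup zify.
Set Implicit Arguments. Unset Strict Implicit.
Import Order.TTheory.

(* Upper bound: the middle value n/2 has a neighbour in the sequence, and every
   value in {0..n-1} lies within n/2 of it.  Lower bound: interleaving the upper
   half n/2, n/2+1, ... with the lower half 0, 1, ... makes every gap n/2 or
   n/2 + 1. *)

Lemma natdistC a b : natdist a b = natdist b a.
Proof. by rewrite /natdist maxnC minnC. Qed.

Lemma natdist_half_le n a : a < n -> natdist a n./2 <= n./2.
Proof. rewrite /natdist; lia. Qed.

Lemma perm_atE n (s : {perm 'I_n}) (i : 'I_n) : perm_at s i = val (s i).
Proof. by rewrite /perm_at valK. Qed.

Lemma min_gap_le n (s : {perm 'I_n}) (i : 'I_n.-1) :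
  min_gap s <= natdist (perm_at s i.+1) (perm_at s i).
Proof. exact: (bigmin_le _ i (fun i : 'I_n.-1 => natdist _ _)). Qed.

Lemma min_gap_ge n (s : {perm 'I_n}) m : m <= n ->
  (forall i : 'I_n.-1, m <= natdist (perm_at s i.+1) (perm_at s i)) ->
  m <= min_gap s.
Proof.
move=> le_mn le_m_gap.
by apply: (big_ind (leq m)) => // x y; rewrite leq_min => ->.
Qed.

Lemma min_gap_le_succ n (s : {perm 'I_n}) (p q : 'I_n) :
  q = p.+1 :> nat -> min_gap s <= natdist (val (s q)) (val (s p)).
Proof.
move=> qE; have lt_p_n1 : p < n.-1 by have := ltn_ord q; lia.
by have := min_gap_le s (Ordinal lt_p_n1); rewrite /= -qE !perm_atE.
Qed.

Lemma min_gap_le_adjacent n (s : {perm 'I_n}) (p q : 'I_n) :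
  natdist p q = 1 -> min_gap s <= natdist (val (s p)) (val (s q)).
Proof.
rewrite {1}/natdist => dist1; have [le_pq | lt_qp] := leqP p q.
  by rewrite natdistC; apply: min_gap_le_succ; lia.
by apply: min_gap_le_succ; lia.
Qed.

Lemma exists_adjacent n (p : 'I_n) : 2 <= n -> exists q : 'I_n, natdist p q = 1.
Proof.
move=> n_ge2; have lt_p_n := ltn_ord p.
have [lt_p1_n | ge_p1_n] := ltnP p.+1 n.
  by exists (Ordinal lt_p1_n); rewrite /natdist /=; lia.
have lt_p1 : p.-1 < n by lia.
by exists (Ordinal lt_p1); rewrite /natdist /=; lia.
Qed.

Lemma min_gap_le_half n (s : {perm 'I_n}) : 2 <= n -> min_gap s <= n./2.
Proof.
move=> n_ge2; have lt_half_n : n./2 < n by lia.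
set p := (s^-1)%g (Ordinal lt_half_n).
have [q adj_pq] := exists_adjacent p n_ge2.
apply: leq_trans (min_gap_le_adjacent s adj_pq) _.
by rewrite permKV /= natdistC natdist_half_le.
Qed.

Definition zigzag n i := if odd i then i./2 else n./2 + i./2.

Lemma zigzag_lt n i : i < n -> zigzag n i < n.
Proof. by rewrite /zigzag; case: (boolP (odd i)) => odd_i; lia. Qed.

Lemma zigzag_inj n : {in gtn n &, injective (zigzag n)}.
Proof.
move=> i j; rewrite !inE /= => lt_i_n lt_j_n; rewrite /zigzag.
by case: (boolP (odd i)) => odd_i; case: (boolP (odd j)) => odd_j; lia.
Qed.

Lemma natdist_zigzag n i : n./2 <= natdist (zigzag n i.+1) (zigzag n i).
Proof.
rewrite /natdist /zigzag /= uphalf_half.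
by case: (boolP (odd i)) => odd_i /=; lia.
Qed.

Definition zigzag_ord n (i : 'I_n) : 'I_n := Ordinal (zigzag_lt (ltn_ord i)).

Lemma zigzag_ord_inj n : injective (@zigzag_ord n).
Proof.
move=> i j /(congr1 val) /= /zigzag_inj eq_ij.
by apply: val_inj; apply: eq_ij; rewrite inE.
Qed.

Definition zigzag_perm n : {perm 'I_n} := perm (@zigzag_ord_inj n).

Lemma min_gap_zigzag n : n./2 <= min_gap (zigzag_perm n).
Proof.
apply: min_gap_ge => [|i]; first lia.
have lt_i1_n : i.+1 < n by have := ltn_ord i; lia.
have lt_i_n : (i : nat) < n by lia.
rewrite (perm_atE _ (Ordinal lt_i1_n)) (perm_atE _ (Ordinal lt_i_n)) !permE.
exact: natdist_zigzag.
Qed.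

Theorem theorem4p1 (n : nat) (hn : 2 <= n) :
  \max_(s : {perm 'I_n}) min_gap s = n./2.
Proof.
apply/eqP; rewrite eqn_leq; apply/andP; split.
  by apply/bigmax_leqP => s _; apply: min_gap_le_half.
exact: leq_trans (min_gap_zigzag n) (leq_bigmax _).
Qed.
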